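(* Let $J_1,J_2$ be either (i) Lennard-Jones potentials: $J_1(z)=\frac{k_1}{z^{12}}-\frac{k_2}{z^6}$ for $z>0$, $J_1(z)=+\infty$ for $z\le0$, with $k_1,k_2>0$, and $J_2(z)=J_1(2z)$; or (ii) Morse potentials: $J_1(z)=k_1\big(1-e^{-k_2(z-\delta_1)}\big)^2-k_1$ for $z\in\mathbb R$ with $\delta_1,k_1,k_2>0$, and $J_2(z)=J_1(2z)$. Let $\delta_1$ be the unique minimizer of $J_1$ and $\gamma$ the unique minimizer of $J_0$. Then $J_1(\gamma)<0$, $J_2(\gamma)<0$, $J_2(\delta_1)<0$, $J_2(\gamma)>2J_2\big(\frac{\delta_1+\gamma}{2}\big)$, and $$R(t):=J_2\Big(\frac{\gamma+t}{2}\Big)+\frac12\big(J_1(\gamma)+J_1(t)\big)-J_0(\gamma)-\frac32\big(J_{CB}(t)-J_0(\gamma)\big)\le0\quad\text{for all }t\in\operatorname{dom}J_1.$$ Furthermore, for every $\theta>0$ there exists $\eta_\theta>0$ such that $J_2\big(\frac{t+\gamma}{2}\big)<0$ for all $t\in\operatorname{dom}J_1$ with $J_1(t)<J_1(\theta)+2\eta_\theta$.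
   Context: $J_{CB}:=J_1+J_2$; $J_0(z):=J_2(z)+\frac12\inf\{J_1(z_1)+J_1(z_2):z_1+z_2=2z\}$. It is known (from prior work) that these potentials satisfy the standing hypotheses of the paper; in particular $J_0$ has a unique minimizer $\gamma>0$, which coincides with the unique minimizer of $J_{CB}$, and $J_0(\gamma)=J_{CB}(\gamma)$. *)

From Stdlib Require Import Reals Lra ClassicalEpsilon.
Open Scope R_scope.

Inductive potential : Type :=
  | LennardJones (k1 k2 : R)
  | MorsePot (d1 k1 k2 : R).

Definition valid (p : potential) : Prop :=
  match p with
  | LennardJones k1 k2 => 0 < k1 /\ 0 < k2
  | MorsePot d1 k1 k2 => 0 < d1 /\ 0 < k1 /\ 0 < k2
  end.

Definition dom (p : potential) (z : R) : Prop :=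
  match p with
  | LennardJones _ _ => 0 < z
  | MorsePot _ _ _ => True
  end.

(* Real-valued J1; outside [dom p] (value +oo in the paper) the value
   is an irrelevant placeholder and is never used. *)
Definition J1 (p : potential) (z : R) : R :=
  match p with
  | LennardJones k1 k2 => k1 / z ^ 12 - k2 / z ^ 6
  | MorsePot d1 k1 k2 => k1 * (1 - exp (- k2 * (z - d1))) ^ 2 - k1
  end.

Definition J2 (p : potential) (z : R) : R := J1 p (2 * z).

Definition JCB (p : potential) (z : R) : R := J1 p z + J2 p z.

Definition is_lb (E : R -> Prop) (m : R) : Prop := forall x, E x -> m <= x.
Definition is_glb (E : R -> Prop) (m : R) : Prop :=
  is_lb E m /\ (forall b, is_lb E b -> b <= m).
Definition Rinf (E : R -> Prop) : R :=
  epsilon (inhabits 0) (fun m => is_glb E m).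

(* J0(z) = J2(z) + 1/2 inf { J1 z1 + J1 z2 : z1 + z2 = 2 z }, the infimum
   being over pairs with finite value, i.e. z1, z2 in dom J1. *)
Definition J0 (p : potential) (z : R) : R :=
  J2 p z + / 2 * Rinf (fun s => exists z1 z2, dom p z1 /\ dom p z2 /\
                                  z1 + z2 = 2 * z /\ s = J1 p z1 + J1 p z2).

Definition unique_minimizer (p : potential) (f : R -> R) (x : R) : Prop :=
  dom p x /\ forall z, dom p z -> z <> x -> f x < f z.

From Stdlib Require Import Reals Lra Lia ClassicalEpsilon.
Open Scope R_scope.

(* Under the substitution y = k1 / (k2 z^6) (Lennard-Jones), resp.
   y = exp (- k2 (z - d1)) (Morse), J1 and J2 become polynomials in y, and the
   midpoint of two points corresponds to a mean of their y-values (between the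
   harmonic and arithmetic means, resp. exactly the geometric mean).  This
   bounds the infimum in J0 from below by the minimum of J_CB, so gamma is the
   minimizer of J_CB and J0 gamma = J_CB gamma: y(gamma) = 2080/4097, resp. the
   positive root of 2 B^2 y^3 + (1 - 2B) y - 1 with B = exp (- k2 d1).  Every
   claim is then a polynomial inequality in y. *)

Lemma is_glb_exists (E : R -> Prop) (L : R) :
  (exists x, E x) -> is_lb E L -> exists m, is_glb E m.
Proof.
  intros [x0 Hx0] HL.
  destruct (completeness (fun y => E (- y))) as [M [HM_ub HM_least]].
  - exists (- L). intros y Hy. specialize (HL _ Hy). lra.
  - exists (- x0). rewrite Ropp_involutive. exact Hx0.
  - exists (- M). split.
    + intros x Hx. assert (H : - x <= M) by (apply HM_ub; rewrite Ropp_involutive; exact Hx).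
      lra.
    + intros b Hb. assert (H : M <= - b).
      { apply HM_least. intros y Hy. specialize (Hb _ Hy). lra. }
      lra.
Qed.

Lemma is_glb_Rinf (E : R -> Prop) (L : R) :
  (exists x, E x) -> is_lb E L -> is_glb E (Rinf E).
Proof.
  intros HE HL. unfold Rinf. apply epsilon_spec. exact (is_glb_exists E L HE HL).
Qed.

Lemma unique_minimizer_eq (p : potential) (f : R -> R) (x y : R) :
  unique_minimizer p f x -> dom p y -> (forall z, dom p z -> f y <= f z) -> x = y.
Proof.
  intros [Hx Hmin] Hy Hy_min. destruct (Req_dec x y) as [E|E]; [exact E|].
  specialize (Hmin y Hy (not_eq_sym E)). specialize (Hy_min x Hx). lra.
Qed.

Section J0_bounds.

Variables (p : potential) (m : R).
Hypothesis pair_bound : forall z1 z2, dom p z1 -> dom p z2 ->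
  m <= J1 p (z1 + z2) + / 2 * (J1 p z1 + J1 p z2).

Lemma J0_between (z : R) : dom p z -> m <= J0 p z <= JCB p z.
Proof.
  intros Hz.
  set (E := fun s => exists z1 z2, dom p z1 /\ dom p z2 /\
                                   z1 + z2 = 2 * z /\ s = J1 p z1 + J1 p z2).
  assert (HE_lb : is_lb E (2 * (m - J2 p z))).
  { intros s (z1 & z2 & H1 & H2 & Hsum & ->).
    specialize (pair_bound z1 z2 H1 H2). unfold J2. rewrite <- Hsum. lra. }
  assert (Hzz : E (J1 p z + J1 p z)) by (exists z, z; repeat split; auto; ring).
  destruct (is_glb_Rinf E _ (ex_intro _ _ Hzz) HE_lb) as [Hlb Hgreatest].
  change (J0 p z) with (J2 p z + / 2 * Rinf E). unfold JCB.
  specialize (Hlb _ Hzz). specialize (Hgreatest _ HE_lb). lra.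
Qed.

Lemma J0_minimizer (zs gamma : R) :
  dom p zs -> JCB p zs <= m -> unique_minimizer p (J0 p) gamma ->
  gamma = zs /\ J0 p gamma = m.
Proof.
  intros Hzs HJCB Hgamma.
  destruct (J0_between zs Hzs) as [Hm_le Hle_JCB].
  assert (Hzs_min : forall z, dom p z -> J0 p zs <= J0 p z).
  { intros z Hz. destruct (J0_between z Hz). lra. }
  assert (Heq : gamma = zs) by exact (unique_minimizer_eq _ _ _ _ Hgamma Hzs Hzs_min).
  subst gamma. split; [reflexivity | lra].
Qed.

End J0_bounds.

Lemma pow_lt_compat (x y : R) (n : nat) : 0 <= x < y -> (0 < n)%nat -> x ^ n < y ^ n.
Proof.
  intros [Hx Hxy] Hn. induction n as [|n IH]; [lia|].
  destruct n as [|n]; [simpl; lra|].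
  specialize (IH ltac:(lia)). assert (0 <= x ^ S n) by (apply pow_le; lra).
  simpl in *. nra.
Qed.

Lemma exists_pow6_eq (c : R) : 0 < c -> exists z, 0 < z /\ z ^ 6 = c.
Proof.
  intros Hc. exists (Rpower c (/ 6)). split; [apply exp_pos|].
  rewrite <- Rpower_pow by apply exp_pos.
  rewrite Rpower_mult. replace (/ 6 * INR 6) with 1 by (simpl; field).
  apply Rpower_1, Hc.
Qed.

Lemma midpoint_pow6_le (a b : R) : 0 < a -> 0 < b -> ((a + b) / 2) ^ 6 <= (a ^ 6 + b ^ 6) / 2.
Proof.
  intros Ha Hb.
  assert (Hsq : ((a + b) / 2) ^ 2 <= (a ^ 2 + b ^ 2) / 2)
    by (assert (H := pow2_ge_0 (a - b)); nra).
  assert (Hcube : forall u v, 0 <= u -> 0 <= v -> ((u + v) / 2) ^ 3 <= (u ^ 3 + v ^ 3) / 2).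
  { intros u v Hu Hv.
    assert (0 <= (u + v) * (u - v) ^ 2) by (apply Rmult_le_pos; [lra | apply pow2_ge_0]).
    assert (E : (u ^ 3 + v ^ 3) / 2 - ((u + v) / 2) ^ 3 = 3 / 8 * ((u + v) * (u - v) ^ 2))
      by field.
    lra. }
  replace (((a + b) / 2) ^ 6) with ((((a + b) / 2) ^ 2) ^ 3) by ring.
  replace (a ^ 6) with ((a ^ 2) ^ 3) by ring. replace (b ^ 6) with ((b ^ 2) ^ 3) by ring.
  eapply Rle_trans; [apply pow_incr; split; [nra | exact Hsq]|].
  apply Hcube; nra.
Qed.

Lemma midpoint_pow6_ge (a b : R) : 0 < a -> 0 < b -> a ^ 3 * b ^ 3 <= ((a + b) / 2) ^ 6.
Proof.
  intros Ha Hb. replace (a ^ 3 * b ^ 3) with ((a * b) ^ 3) by ring.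
  replace (((a + b) / 2) ^ 6) with ((((a + b) / 2) ^ 2) ^ 3) by ring.
  apply pow_incr. assert (H := pow2_ge_0 (a - b)). split; nra.
Qed.

Definition lj_f (y : R) : R := y ^ 2 - y.

(* The minimizer of [lj_f y + lj_f (y / 64)]. *)
Definition lj_ystar : R := 2080 / 4097.

Lemma lj_pair_bound (y1 y2 yc : R) : 0 < y1 -> 0 < y2 -> 0 < yc -> 2 * yc <= y1 + y2 ->
  lj_f lj_ystar + lj_f (lj_ystar / 64) <= lj_f (yc / 64) + / 2 * (lj_f y1 + lj_f y2).
Proof.
  intros Hy1 Hy2 Hyc Hsum. unfold lj_f, lj_ystar.
  destruct (Rle_lt_dec (1 / 2) yc).
  - assert (H1 := pow2_ge_0 (y1 - yc)). assert (H2 := pow2_ge_0 (y2 - yc)).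
    assert (H3 := pow2_ge_0 (yc - 2080 / 4097)). nra.
  - assert (H1 := pow2_ge_0 (y1 - 1 / 2)). assert (H2 := pow2_ge_0 (y2 - 1 / 2)). nra.
Qed.

Lemma lj_remainder_bound (y q : R) :
  0 < y -> lj_ystar * y <= 32 * (lj_ystar + y) * q -> q <= lj_ystar ->
  lj_f q - lj_f y - 3 / 2 * lj_f (y / 64) + lj_f lj_ystar + / 2 * lj_f (lj_ystar / 64) <= 0.
Proof.
  intros Hy Hq_lb Hq_ub. unfold lj_ystar in *.
  destruct (Rle_lt_dec q (1 / 2)).
  - (* [lj_f] decreases on [0, 1/2], so the worst case is the lower bound on [q]. *)
    set (q0 := 2080 / 4097 * y / (32 * (2080 / 4097 + y))).
    assert (Hq0 : 0 <= q0 <= q).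
    { unfold q0. split.
      - apply Rmult_le_pos; [nra | left; apply Rinv_0_lt_compat; nra].
      - apply Rmult_le_reg_r with (32 * (2080 / 4097 + y)); [nra|].
        field_simplify; nra. }
    assert (lj_f q <= lj_f q0) by (unfold lj_f; nra).
    assert (E : lj_f q0 - lj_f y - 3 / 2 * lj_f (y / 64) + lj_f (2080 / 4097)
                + / 2 * lj_f (2080 / 4097 / 64)
       = - ((y - 2080 / 4097) ^ 2 / (2080 / 4097 + y) ^ 2)
         * (34091265 / 134283272 + 528643 / 524416 * y + 8195 / 8192 * y ^ 2)).
    { unfold q0, lj_f. field. lra. }
    assert (0 <= (y - 2080 / 4097) ^ 2 / (2080 / 4097 + y) ^ 2).
    { apply Rmult_le_pos; [apply pow2_ge_0 | left; apply Rinv_0_lt_compat, pow_lt; lra]. }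
    assert (0 < 34091265 / 134283272 + 528643 / 524416 * y + 8195 / 8192 * y ^ 2) by nra.
    nra.
  - assert (lj_f q <= lj_f (2080 / 4097)) by (unfold lj_f; nra).
    unfold lj_f in *. assert (Hsq := pow2_ge_0 (y - 1 / 2)). nra.
Qed.

Section LennardJones.

Variables k1 k2 : R.
Hypotheses (Hk1 : 0 < k1) (Hk2 : 0 < k2).

Local Notation p := (LennardJones k1 k2).

Definition lj_y (z : R) : R := k1 / (k2 * z ^ 6).

Definition lj_scale : R := k2 ^ 2 / k1.

Lemma lj_scale_pos : 0 < lj_scale.
Proof. unfold lj_scale. apply Rdiv_lt_0_compat; nra. Qed.

Lemma lj_y_pos (z : R) : 0 < z -> 0 < lj_y z.
Proof.
  intros Hz. unfold lj_y. apply Rdiv_lt_0_compat; [lra|].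
  apply Rmult_lt_0_compat; [lra | apply pow_lt; lra].
Qed.

Lemma lj_y_double (z : R) : 0 < z -> lj_y (2 * z) = lj_y z / 64.
Proof. intros Hz. unfold lj_y. assert (0 < z ^ 6) by (apply pow_lt; lra). field. lra. Qed.

Lemma lj_y_decreasing (x z : R) : 0 < x < z -> lj_y z < lj_y x.
Proof.
  intros Hxz. unfold lj_y.
  assert (x ^ 6 < z ^ 6) by (apply pow_lt_compat; [lra | lia]).
  assert (0 < x ^ 6) by (apply pow_lt; lra).
  apply Rmult_lt_compat_l; [lra|]. apply Rinv_lt_contravar.
  - apply Rmult_lt_0_compat; apply Rmult_lt_0_compat; lra.
  - apply Rmult_lt_compat_l; lra.
Qed.

Lemma lj_y_surjective (y : R) : 0 < y -> exists z, 0 < z /\ lj_y z = y.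
Proof.
  intros Hy. destruct (exists_pow6_eq (k1 / (k2 * y))) as [z [Hz Hz6]].
  { apply Rdiv_lt_0_compat; nra. }
  exists z. split; [exact Hz|]. unfold lj_y. rewrite Hz6. field. lra.
Qed.

Lemma lj_y_midpoint_le (a b : R) : 0 < a -> 0 < b ->
  2 * lj_y ((a + b) / 2) <= lj_y a + lj_y b.
Proof.
  intros Ha Hb. unfold lj_y.
  assert (Hc := midpoint_pow6_ge a b Ha Hb).
  set (c6 := ((a + b) / 2) ^ 6) in *. set (x := a ^ 3) in *. set (w := b ^ 3) in *.
  replace (a ^ 6) with (x ^ 2) by (unfold x; ring). replace (b ^ 6) with (w ^ 2) by (unfold w; ring).
  assert (0 < x) by (apply pow_lt; lra). assert (0 < w) by (apply pow_lt; lra).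
  assert (0 < c6) by nra.
  assert (E : k1 / (k2 * x ^ 2) + k1 / (k2 * w ^ 2) - 2 * (k1 / (k2 * c6))
            = k1 / k2 * ((x - w) ^ 2 / (x ^ 2 * w ^ 2) + 2 * (c6 - x * w) / (x * w * c6)))
    by (field; repeat split; nra).
  assert (0 <= (x - w) ^ 2 / (x ^ 2 * w ^ 2))
    by (apply Rmult_le_pos; [apply pow2_ge_0 | left; apply Rinv_0_lt_compat];
        apply Rmult_lt_0_compat; apply pow_lt; lra).
  assert (0 <= 2 * (c6 - x * w) / (x * w * c6))
    by (apply Rmult_le_pos; [lra | left; apply Rinv_0_lt_compat;
        repeat apply Rmult_lt_0_compat; lra]).
  assert (0 < k1 / k2) by (apply Rdiv_lt_0_compat; lra).
  nra.
Qed.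

Lemma lj_y_midpoint_ge (a b : R) : 0 < a -> 0 < b ->
  2 * lj_y a * lj_y b <= (lj_y a + lj_y b) * lj_y ((a + b) / 2).
Proof.
  intros Ha Hb. unfold lj_y.
  assert (Hc := midpoint_pow6_le a b Ha Hb).
  assert (0 < ((a + b) / 2) ^ 6) by (apply pow_lt; lra).
  set (c6 := ((a + b) / 2) ^ 6) in *. set (x := a ^ 6) in *. set (w := b ^ 6) in *.
  assert (0 < x) by (apply pow_lt; lra). assert (0 < w) by (apply pow_lt; lra).
  assert (E : (k1 / (k2 * x) + k1 / (k2 * w)) * (k1 / (k2 * c6))
              - 2 * (k1 / (k2 * x)) * (k1 / (k2 * w))
            = (k1 / k2) ^ 2 * (2 * ((x + w) / 2 - c6) / (x * w * c6)))
    by (field; repeat split; lra).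
  assert (0 <= 2 * ((x + w) / 2 - c6) / (x * w * c6))
    by (apply Rmult_le_pos; [lra | left; apply Rinv_0_lt_compat;
        repeat apply Rmult_lt_0_compat; lra]).
  assert (0 <= (k1 / k2) ^ 2) by apply pow2_ge_0.
  nra.
Qed.

Lemma lj_J1 (z : R) : 0 < z -> J1 p z = lj_scale * lj_f (lj_y z).
Proof.
  intros Hz. simpl. unfold lj_scale, lj_f, lj_y. assert (0 < z ^ 6) by (apply pow_lt; lra).
  field. repeat split; lra.
Qed.

Lemma lj_J2 (z : R) : 0 < z -> J2 p z = lj_scale * lj_f (lj_y z / 64).
Proof. intros Hz. unfold J2. rewrite lj_J1, lj_y_double; lra. Qed.

Lemma lj_delta1 (delta1 : R) :
  unique_minimizer p (J1 p) delta1 -> 0 < delta1 /\ lj_y delta1 = 1 / 2.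
Proof.
  intros Hdelta1. destruct (lj_y_surjective (1 / 2)) as [z [Hz Hyz]]; [lra|].
  assert (Heq : delta1 = z).
  { apply (unique_minimizer_eq p (J1 p)); [exact Hdelta1 | exact Hz|].
    intros x Hx. simpl in Hx. rewrite !lj_J1, Hyz by lra.
    apply Rmult_le_compat_l; [left; apply lj_scale_pos|].
    unfold lj_f. assert (H := pow2_ge_0 (lj_y x - 1 / 2)). nra. }
  subst delta1. split; assumption.
Qed.

Lemma lj_gamma (gamma : R) :
  unique_minimizer p (J0 p) gamma ->
  0 < gamma /\ lj_y gamma = lj_ystar /\
  J0 p gamma = lj_scale * (lj_f lj_ystar + lj_f (lj_ystar / 64)).
Proof.
  intros Hgamma. destruct (lj_y_surjective lj_ystar) as [z [Hz Hyz]]; [unfold lj_ystar; lra|].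
  set (m := lj_scale * (lj_f lj_ystar + lj_f (lj_ystar / 64))).
  assert (Hpair : forall z1 z2, dom p z1 -> dom p z2 ->
                  m <= J1 p (z1 + z2) + / 2 * (J1 p z1 + J1 p z2)).
  { intros z1 z2 Hz1 Hz2. simpl in Hz1, Hz2.
    replace (z1 + z2) with (2 * ((z1 + z2) / 2)) by field.
    rewrite !lj_J1, lj_y_double by lra.
    assert (Hpair := lj_pair_bound (lj_y z1) (lj_y z2) (lj_y ((z1 + z2) / 2))
      (lj_y_pos z1 Hz1) (lj_y_pos z2 Hz2) (lj_y_pos ((z1 + z2) / 2) ltac:(lra))
      (lj_y_midpoint_le z1 z2 Hz1 Hz2)).
    assert (HK := lj_scale_pos). unfold m. nra. }
  assert (HJCB : JCB p z <= m) by (unfold JCB, m; rewrite lj_J1, lj_J2, Hyz by exact Hz; lra).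
  destruct (J0_minimizer p m Hpair z gamma Hz HJCB Hgamma) as [-> HJ0].
  auto.
Qed.

Section Claims.

Variables delta1 gamma : R.
Hypotheses (Hdelta1_pos : 0 < delta1) (Hy_delta1 : lj_y delta1 = 1 / 2).
Hypotheses (Hgamma_pos : 0 < gamma) (Hy_gamma : lj_y gamma = lj_ystar).

Lemma lj_J1_gamma_neg : J1 p gamma < 0.
Proof.
  rewrite lj_J1, Hy_gamma by exact Hgamma_pos. assert (HK := lj_scale_pos).
  unfold lj_f, lj_ystar. nra.
Qed.

Lemma lj_J2_gamma_neg : J2 p gamma < 0.
Proof.
  rewrite lj_J2, Hy_gamma by exact Hgamma_pos. assert (HK := lj_scale_pos).
  unfold lj_f, lj_ystar. nra.
Qed.

Lemma lj_J2_delta1_neg : J2 p delta1 < 0.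
Proof.
  rewrite lj_J2, Hy_delta1 by exact Hdelta1_pos. assert (HK := lj_scale_pos).
  unfold lj_f. nra.
Qed.

Lemma lj_gamma_lt_delta1 : gamma < delta1.
Proof.
  destruct (Rlt_le_dec gamma delta1) as [|[Hlt | Heq]]; [assumption| |].
  - assert (H := lj_y_decreasing delta1 gamma ltac:(lra)).
    rewrite Hy_gamma, Hy_delta1 in H. unfold lj_ystar in H. lra.
  - subst gamma. rewrite Hy_gamma in Hy_delta1. unfold lj_ystar in Hy_delta1. lra.
Qed.

Lemma lj_J2_gamma_gt_midpoint : J2 p gamma > 2 * J2 p ((delta1 + gamma) / 2).
Proof.
  assert (Hgd := lj_gamma_lt_delta1).
  rewrite !lj_J2, Hy_gamma by lra. assert (HK := lj_scale_pos).
  set (q := lj_y ((delta1 + gamma) / 2)).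
  assert (q < lj_ystar) by (rewrite <- Hy_gamma; apply lj_y_decreasing; lra).
  assert (1 / 2 < q) by (rewrite <- Hy_delta1; apply lj_y_decreasing; lra).
  assert (lj_f (q / 64) <= lj_f (1 / 2 / 64)) by (unfold lj_f, lj_ystar in *; nra).
  unfold lj_f, lj_ystar in *. nra.
Qed.

Hypothesis HJ0_gamma : J0 p gamma = lj_scale * (lj_f lj_ystar + lj_f (lj_ystar / 64)).

Lemma lj_remainder_nonpos (t : R) : 0 < t ->
  J2 p ((gamma + t) / 2) + / 2 * (J1 p gamma + J1 p t) - J0 p gamma
    - 3 / 2 * (JCB p t - J0 p gamma) <= 0.
Proof.
  intros Ht. unfold JCB. rewrite HJ0_gamma, !lj_J1, !lj_J2, Hy_gamma by lra.
  set (q := lj_y ((gamma + t) / 2) / 64).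
  assert (Hq_ub : q <= lj_ystar).
  { unfold q. rewrite <- lj_y_double by lra. rewrite <- Hy_gamma.
    left. apply lj_y_decreasing. lra. }
  assert (Hq_lb : lj_ystar * lj_y t <= 32 * (lj_ystar + lj_y t) * q).
  { unfold q. rewrite <- Hy_gamma. assert (H := lj_y_midpoint_ge gamma t Hgamma_pos Ht). lra. }
  assert (H := lj_remainder_bound (lj_y t) q (lj_y_pos t Ht) Hq_lb Hq_ub).
  assert (HK := lj_scale_pos). nra.
Qed.

Lemma lj_J2_midpoint_neg (t : R) : 0 < t -> J2 p ((t + gamma) / 2) < 0.
Proof.
  intros Ht. rewrite lj_J2, <- lj_y_double by lra.
  replace (2 * ((t + gamma) / 2)) with (t + gamma) by field.
  assert (lj_y (t + gamma) < lj_ystar) by (rewrite <- Hy_gamma; apply lj_y_decreasing; lra).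
  assert (0 < lj_y (t + gamma)) by (apply lj_y_pos; lra).
  assert (lj_f (lj_y (t + gamma)) < 0) by (unfold lj_f, lj_ystar in *; nra).
  assert (HK := lj_scale_pos). nra.
Qed.

End Claims.

End LennardJones.

Definition morse_f (y : R) : R := y ^ 2 - 2 * y.

Definition morse_h (B y : R) : R := morse_f (B * y ^ 2) + morse_f y.

(* Half the derivative of [morse_h B]. *)
Definition morse_g (B y : R) : R := 2 * B ^ 2 * y ^ 3 + (1 - 2 * B) * y - 1.

Lemma morse_f_sublevel (W U : R) : 0 < W < U -> 2 < U ->
  exists c, 0 < c /\ forall w u, 0 < w < W -> morse_f u < morse_f w + c -> u < U.
Proof.
  intros HWU HU. exists (morse_f U - Rmax 0 (morse_f W)). split.
  - assert (Rmax 0 (morse_f W) < morse_f U) by (apply Rmax_lub_lt; unfold morse_f; nra).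
    lra.
  - intros w u Hw Hu. destruct (Rlt_le_dec u U) as [|HUu]; [assumption|]. exfalso.
    assert (Hfw : morse_f w <= Rmax 0 (morse_f W)).
    { destruct (Rle_lt_dec w 2).
      - apply Rle_trans with 0; [unfold morse_f; nra | apply Rmax_l].
      - apply Rle_trans with (morse_f W); [unfold morse_f; nra | apply Rmax_r]. }
    assert (morse_f U <= morse_f u) by (unfold morse_f; nra).
    lra.
Qed.

Lemma morse_root_exists (B : R) : 0 < B < 1 -> exists y, 0 < y /\ morse_g B y = 0.
Proof.
  intros HB. destruct (IVT (morse_g B) 0 2) as [y [[Hy0 Hy2] Hgy]].
  - unfold morse_g. reg.
  - lra.
  - unfold morse_g. lra.
  - unfold morse_g. nra.
  - exists y. split; [|exact Hgy].
    destruct Hy0 as [|<-]; [assumption|]. unfold morse_g in Hgy. lra.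
Qed.

Section MorseRoot.

Variables B ys : R.
Hypotheses (HB : 0 < B < 1) (Hys_pos : 0 < ys) (Hys_root : morse_g B ys = 0).

Lemma morse_root_bounds : 1 < ys /\ ys < 2 /\ B * ys ^ 2 < 1.
Proof.
  unfold morse_g in Hys_root.
  assert (H1 : 1 < ys).
  { destruct (Rlt_le_dec 1 ys) as [|Hle]; [assumption|]. exfalso.
    assert (ys ^ 3 <= ys) by (simpl; nra).
    assert (2 * B ^ 2 - 2 * B + 1 < 1) by nra.
    nra. }
  assert (H2 : ys < 2).
  { destruct (Rlt_le_dec ys 2) as [|Hle]; [assumption|]. exfalso.
    assert (E : 2 * B ^ 2 * ys ^ 3 + (1 - 2 * B) * ys - 1 - (16 * B ^ 2 - 4 * B + 1)
              = (ys - 2) * (2 * B ^ 2 * (ys ^ 2 + 2 * ys + 4) + 1 - 2 * B)) by ring.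
    assert (0 < 16 * B ^ 2 - 4 * B + 1) by nra.
    assert (0 < 2 * B ^ 2 * (ys ^ 2 + 2 * ys + 4) + 1 - 2 * B) by nra.
    nra. }
  repeat split; [assumption | assumption |].
  assert (E : 2 * B * ys * (B * ys ^ 2 - 1) = 1 - ys) by nra.
  nra.
Qed.

Lemma morse_h_min (y : R) : 0 <= y -> morse_h B ys <= morse_h B y.
Proof.
  intros Hy. destruct morse_root_bounds as [H1 [H2 H3]].
  unfold morse_h, morse_f. unfold morse_g in Hys_root.
  assert (E : (B * y ^ 2) ^ 2 - 2 * (B * y ^ 2) + (y ^ 2 - 2 * y)
              - ((B * ys ^ 2) ^ 2 - 2 * (B * ys ^ 2) + (ys ^ 2 - 2 * ys))
            = (y - ys) ^ 2 * (B ^ 2 * (y ^ 2 + 2 * y * ys + 3 * ys ^ 2) + 1 - 2 * B)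
              + 2 * (2 * B ^ 2 * ys ^ 3 + (1 - 2 * B) * ys - 1) * (y - ys)) by ring.
  rewrite Hys_root in E.
  assert (0 <= B ^ 2 * (y ^ 2 + 2 * y * ys)) by (apply Rmult_le_pos; nra).
  assert (0 < 3 * B ^ 2 * ys ^ 2 + 1 - 2 * B) by nra.
  assert (0 <= (y - ys) ^ 2 * (B ^ 2 * (y ^ 2 + 2 * y * ys + 3 * ys ^ 2) + 1 - 2 * B))
    by (apply Rmult_le_pos; [apply pow2_ge_0 | nra]).
  lra.
Qed.

Lemma morse_pair_bound (y1 y2 yc : R) : 0 < y1 -> 0 < y2 -> 0 < yc -> yc ^ 2 = y1 * y2 ->
  morse_h B ys <= morse_f (B * y1 * y2) + / 2 * (morse_f y1 + morse_f y2).
Proof.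
  intros Hy1 Hy2 Hyc Hgeom.
  assert (Hsum : 2 * yc <= y1 + y2) by (assert (H := pow2_ge_0 (y1 - y2)); nra).
  replace (B * y1 * y2) with (B * yc ^ 2) by (rewrite Hgeom; ring).
  destruct (Rle_lt_dec 1 yc).
  - assert (Hmin := morse_h_min yc ltac:(lra)). unfold morse_h, morse_f in *.
    assert (Hq1 := pow2_ge_0 (y1 - yc)). assert (Hq2 := pow2_ge_0 (y2 - yc)). nra.
  - assert (Hmin := morse_h_min 1 ltac:(lra)). unfold morse_h, morse_f in *.
    assert (Hq1 := pow2_ge_0 (y1 - 1)). assert (Hq2 := pow2_ge_0 (y2 - 1)).
    assert (yc ^ 2 <= 1) by nra.
    assert (0 <= B * yc ^ 2 <= B) by (split; nra).
    assert ((B * yc ^ 2) ^ 2 - 2 * (B * yc ^ 2) >= B ^ 2 - 2 * B) by nra.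
    nra.
Qed.

Lemma morse_g_increasing (a b : R) : 1 <= a < b -> morse_g B a < morse_g B b.
Proof.
  intros Hab. unfold morse_g.
  assert (E : 2 * B ^ 2 * b ^ 3 + (1 - 2 * B) * b - 1 - (2 * B ^ 2 * a ^ 3 + (1 - 2 * B) * a - 1)
            = (b - a) * (2 * B ^ 2 * (b ^ 2 + a * b + a ^ 2) + 1 - 2 * B)) by ring.
  assert (3 <= b ^ 2 + a * b + a ^ 2) by nra.
  assert (6 * B ^ 2 <= 2 * B ^ 2 * (b ^ 2 + a * b + a ^ 2)) by nra.
  assert (0 < (b - a) * (2 * B ^ 2 * (b ^ 2 + a * b + a ^ 2) + 1 - 2 * B))
    by (apply Rmult_lt_0_compat; nra).
  lra.
Qed.

Lemma morse_root_lt : ys * (1 + 2 * B + 4 * B ^ 2) < 1 + 8 * B.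
Proof.
  destruct morse_root_bounds as [H1 _].
  set (D := 1 + 2 * B + 4 * B ^ 2). assert (HD : 0 < D) by (unfold D; nra).
  set (r := (1 + 8 * B) / D).
  assert (HrD : r * D = 1 + 8 * B) by (unfold r; field; apply Rgt_not_eq; exact HD).
  assert (Hr1 : 1 <= r) by (unfold D in *; nra).
  assert (Hgr : 0 < morse_g B r).
  { assert (E : morse_g B r * D ^ 3
              = 4 * B - 2 * B ^ 2 + 16 * B ^ 3 + 208 * B ^ 4 + 768 * B ^ 5 - 320 * B ^ 6)
      by (unfold morse_g, r, D; field; nra).
    assert (0 < 4 * B - 2 * B ^ 2 + 16 * B ^ 3 + 208 * B ^ 4 + 768 * B ^ 5 - 320 * B ^ 6).
    { assert (0 < B ^ 5) by (apply pow_lt; lra). assert (B ^ 6 < B ^ 5) by (simpl; nra).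
      assert (0 < B ^ 3) by (apply pow_lt; lra). assert (B ^ 2 < B) by nra. nra. }
    assert (0 < D ^ 3) by (apply pow_lt; lra).
    nra. }
  destruct (Rlt_le_dec ys r) as [Hlt | Hle].
  - rewrite <- HrD. apply Rmult_lt_compat_r; assumption.
  - exfalso. destruct Hle as [Hlt | Heq].
    + assert (H := morse_g_increasing r ys (conj Hr1 Hlt)). lra.
    + rewrite <- Heq in Hys_root. lra.
Qed.

Lemma morse_J2_gap : morse_f (B * ys ^ 2) > 2 * morse_f (B * ys).
Proof.
  destruct morse_root_bounds as [H1 [H2 H3]]. assert (Hlt := morse_root_lt).
  unfold morse_g in Hys_root. unfold morse_f.
  (* On the root, [2 B (B ys^3 - 2 ys - 2 B ys + 4) = 1 + 8 B - ys (1 + 2 B + 4 B^2)]. *)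
  assert (E : (B * ys ^ 2) ^ 2 - 2 * (B * ys ^ 2) - 2 * ((B * ys) ^ 2 - 2 * (B * ys))
            = B * ys * (B * ys ^ 3 - 2 * ys - 2 * B * ys + 4)) by ring.
  assert (0 < B * ys ^ 3 - 2 * ys - 2 * B * ys + 4) by nra.
  assert (0 < B * ys) by nra.
  nra.
Qed.

Lemma morse_remainder_bound (u : R) : 0 < u ->
  morse_f (B * ys * u) - morse_f u - 3 / 2 * morse_f (B * u ^ 2)
    + morse_f ys + / 2 * morse_f (B * ys ^ 2) <= 0.
Proof.
  intros Hu. destruct morse_root_bounds as [H1 [H2 H3]].
  unfold morse_g in Hys_root. unfold morse_f.
  assert (E : (B * ys * u) ^ 2 - 2 * (B * ys * u) - (u ^ 2 - 2 * u)
              - 3 / 2 * ((B * u ^ 2) ^ 2 - 2 * (B * u ^ 2))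
              + (ys ^ 2 - 2 * ys) + / 2 * ((B * ys ^ 2) ^ 2 - 2 * (B * ys ^ 2))
            = (u - ys) ^ 2 * (- 3 / 2 * B ^ 2 * u ^ 2 - 3 * B ^ 2 * ys * u
                               + 3 * B - 1 - 7 / 2 * B ^ 2 * ys ^ 2)
              - 2 * (2 * B ^ 2 * ys ^ 3 + (1 - 2 * B) * ys - 1) * (u - ys)) by field.
  rewrite Hys_root in E.
  assert (3 * B - 1 - 7 / 2 * B ^ 2 * ys ^ 2 <= 0).
  { assert (E2 : 2 * ys * (3 * B - 1 - 7 / 2 * B ^ 2 * ys ^ 2)
               = 2 * ys * (3 * B - 1) - 7 / 2 * (1 + (2 * B - 1) * ys)) by nra.
    nra. }
  assert (0 <= (u - ys) ^ 2) by apply pow2_ge_0.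
  assert (0 <= B ^ 2 * u ^ 2) by nra.
  assert (0 <= B ^ 2 * ys * u) by (assert (0 <= B ^ 2) by nra; nra).
  nra.
Qed.

End MorseRoot.

Section Morse.

Variables d1 k1 k2 : R.
Hypotheses (Hd1 : 0 < d1) (Hk1 : 0 < k1) (Hk2 : 0 < k2).

Local Notation p := (MorsePot d1 k1 k2).

Definition morse_y (z : R) : R := exp (- k2 * (z - d1)).

Definition morse_B : R := exp (- k2 * d1).

Lemma morse_B_bounds : 0 < morse_B < 1.
Proof.
  split; [apply exp_pos|]. unfold morse_B. rewrite <- exp_0. apply exp_increasing. nra.
Qed.

Lemma morse_J1 (z : R) : J1 p z = k1 * morse_f (morse_y z).
Proof. simpl. unfold morse_f, morse_y. ring. Qed.

Lemma morse_y_add (a b : R) : morse_y (a + b) = morse_B * morse_y a * morse_y b.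
Proof. unfold morse_y, morse_B. rewrite <- !exp_plus. f_equal. ring. Qed.

Lemma morse_J2_midpoint (a b : R) :
  J2 p ((a + b) / 2) = k1 * morse_f (morse_B * morse_y a * morse_y b).
Proof.
  unfold J2. replace (2 * ((a + b) / 2)) with (a + b) by field.
  rewrite morse_J1, morse_y_add. reflexivity.
Qed.

Lemma morse_J2 (z : R) : J2 p z = k1 * morse_f (morse_B * morse_y z ^ 2).
Proof.
  replace z with ((z + z) / 2) at 1 by field. rewrite morse_J2_midpoint. f_equal. f_equal. ring.
Qed.

Lemma morse_y_midpoint_sq (a b : R) : morse_y ((a + b) / 2) ^ 2 = morse_y a * morse_y b.
Proof. unfold morse_y. simpl. rewrite Rmult_1_r, <- !exp_plus. f_equal. field. Qed.

Lemma morse_y_surjective (y : R) : 0 < y -> exists z, morse_y z = y.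
Proof.
  intros Hy. exists (d1 - ln y / k2). unfold morse_y.
  replace (- k2 * (d1 - ln y / k2 - d1)) with (ln y) by (field; lra). apply exp_ln, Hy.
Qed.

Lemma morse_delta1 (delta1 : R) : unique_minimizer p (J1 p) delta1 -> morse_y delta1 = 1.
Proof.
  intros Hdelta1. destruct (morse_y_surjective 1) as [z Hz]; [lra|].
  replace delta1 with z; [exact Hz|]. symmetry.
  apply (unique_minimizer_eq p (J1 p)); [exact Hdelta1 | exact I|].
  intros x _. rewrite !morse_J1, Hz. apply Rmult_le_compat_l; [lra|].
  unfold morse_f. assert (H := pow2_ge_0 (morse_y x - 1)). nra.
Qed.

Lemma morse_gamma (gamma : R) :
  unique_minimizer p (J0 p) gamma ->
  morse_g morse_B (morse_y gamma) = 0 /\ J0 p gamma = k1 * morse_h morse_B (morse_y gamma).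
Proof.
  intros Hgamma. assert (HB := morse_B_bounds).
  destruct (morse_root_exists morse_B HB) as [ys [Hys_pos Hys_root]].
  destruct (morse_y_surjective ys Hys_pos) as [z Hz].
  set (m := k1 * morse_h morse_B ys).
  assert (Hpair : forall z1 z2, dom p z1 -> dom p z2 ->
                  m <= J1 p (z1 + z2) + / 2 * (J1 p z1 + J1 p z2)).
  { intros z1 z2 _ _. rewrite !morse_J1, morse_y_add.
    assert (H := morse_pair_bound morse_B ys HB Hys_pos Hys_root
      (morse_y z1) (morse_y z2) (morse_y ((z1 + z2) / 2))
      (exp_pos _) (exp_pos _) (exp_pos _) (morse_y_midpoint_sq z1 z2)).
    unfold m. nra. }
  assert (HJCB : JCB p z <= m) by (unfold JCB, m, morse_h; rewrite morse_J1, morse_J2, Hz; lra).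
  destruct (J0_minimizer p m Hpair z gamma I HJCB Hgamma) as [-> HJ0].
  rewrite Hz. split; assumption.
Qed.

Section Claims.

Variables delta1 gamma : R.
Hypotheses (Hy_delta1 : morse_y delta1 = 1) (Hroot : morse_g morse_B (morse_y gamma) = 0).

Let B_bounds := morse_B_bounds.
Let root_bounds := morse_root_bounds morse_B (morse_y gamma) B_bounds (exp_pos _) Hroot.

Lemma morse_J1_gamma_neg : J1 p gamma < 0.
Proof.
  destruct root_bounds as [H1 [H2 _]]. rewrite morse_J1.
  assert (morse_f (morse_y gamma) < 0) by (unfold morse_f; nra). nra.
Qed.

Lemma morse_J2_gamma_neg : J2 p gamma < 0.
Proof.
  destruct root_bounds as [_ [_ H3]]. rewrite morse_J2.
  assert (0 < morse_B * morse_y gamma ^ 2) by (apply Rmult_lt_0_compat; [lra | apply pow_lt, exp_pos]).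
  assert (morse_f (morse_B * morse_y gamma ^ 2) < 0) by (unfold morse_f; nra). nra.
Qed.

Lemma morse_J2_delta1_neg : J2 p delta1 < 0.
Proof.
  rewrite morse_J2, Hy_delta1.
  assert (morse_f (morse_B * 1 ^ 2) < 0) by (unfold morse_f; nra). nra.
Qed.

Lemma morse_J2_gamma_gt_midpoint : J2 p gamma > 2 * J2 p ((delta1 + gamma) / 2).
Proof.
  rewrite morse_J2, morse_J2_midpoint, Hy_delta1.
  assert (H := morse_J2_gap morse_B (morse_y gamma) B_bounds (exp_pos _) Hroot).
  replace (morse_B * 1 * morse_y gamma) with (morse_B * morse_y gamma) by ring. nra.
Qed.

Hypothesis HJ0_gamma : J0 p gamma = k1 * morse_h morse_B (morse_y gamma).

Lemma morse_remainder_nonpos (t : R) :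
  J2 p ((gamma + t) / 2) + / 2 * (J1 p gamma + J1 p t) - J0 p gamma
    - 3 / 2 * (JCB p t - J0 p gamma) <= 0.
Proof.
  unfold JCB. rewrite HJ0_gamma, morse_J2_midpoint, !morse_J1, morse_J2.
  assert (H := morse_remainder_bound morse_B (morse_y gamma) B_bounds (exp_pos _) Hroot
                 (morse_y t) (exp_pos _)).
  unfold morse_h. nra.
Qed.

Lemma morse_J2_midpoint_neg_near (theta : R) : 0 < theta ->
  exists eta, 0 < eta /\
    forall t, J1 p t < J1 p theta + 2 * eta -> J2 p ((t + gamma) / 2) < 0.
Proof.
  intros Htheta. destruct B_bounds as [HB0 HB1]. destruct root_bounds as [H1 [H2 H3]].
  set (ys := morse_y gamma) in *.
  (* [J2((t + gamma) / 2) < 0] as soon as [morse_y t < 2 / (B ys)], while [morse_y theta < 1 / B]. *)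
  assert (HBys : 0 < morse_B * ys < 1) by (split; nra).
  destruct (morse_f_sublevel (/ morse_B) (2 / (morse_B * ys))) as [c [Hc Hsub]].
  - split; [apply Rinv_0_lt_compat; lra|].
    apply Rmult_lt_reg_r with (morse_B * ys); [lra|]. field_simplify; nra.
  - apply Rmult_lt_reg_r with (morse_B * ys); [lra|]. field_simplify; nra.
  - exists (k1 * c / 2). split; [apply Rdiv_lt_0_compat; nra|].
    intros t Ht. rewrite !morse_J1 in Ht.
    assert (Hw : 0 < morse_y theta < / morse_B).
    { split; [apply exp_pos|]. apply Rmult_lt_reg_r with morse_B; [lra|].
      rewrite Rinv_l by lra. unfold morse_y, morse_B. rewrite <- exp_plus, <- exp_0.
      apply exp_increasing. nra. }
    assert (Hu : morse_y t < 2 / (morse_B * ys)).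
    { apply (Hsub (morse_y theta)); [exact Hw|]. apply Rmult_lt_reg_l with k1; lra. }
    rewrite Rplus_comm, morse_J2_midpoint. fold ys.
    assert (Hprod : 0 < morse_B * ys * morse_y t < 2).
    { split; [apply Rmult_lt_0_compat; [lra | apply exp_pos]|].
      apply Rmult_lt_compat_l with (r := morse_B * ys) in Hu; [|lra].
      replace (morse_B * ys * (2 / (morse_B * ys))) with 2 in Hu by (field; lra). exact Hu. }
    assert (morse_f (morse_B * ys * morse_y t) < 0) by (unfold morse_f; nra). nra.
Qed.

End Claims.

End Morse.

Theorem proposition5p10 (p : potential) (delta1 gamma : R) :
  valid p ->
  unique_minimizer p (J1 p) delta1 ->
  unique_minimizer p (J0 p) gamma ->
  J1 p gamma < 0 /\
  J2 p gamma < 0 /\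
  J2 p delta1 < 0 /\
  J2 p gamma > 2 * J2 p ((delta1 + gamma) / 2) /\
  (forall t, dom p t ->
     J2 p ((gamma + t) / 2) + / 2 * (J1 p gamma + J1 p t) - J0 p gamma
       - 3 / 2 * (JCB p t - J0 p gamma) <= 0) /\
  (forall theta, 0 < theta ->
     exists eta, 0 < eta /\
       forall t, dom p t -> J1 p t < J1 p theta + 2 * eta ->
         J2 p ((t + gamma) / 2) < 0).
Proof.
  intros Hvalid Hdelta1 Hgamma.
  destruct p as [k1 k2 | d1 k1 k2]; simpl in Hvalid.
  - destruct Hvalid as [Hk1 Hk2].
    destruct (lj_delta1 k1 k2 Hk1 Hk2 delta1 Hdelta1) as [Hdelta1_pos Hy_delta1].
    destruct (lj_gamma k1 k2 Hk1 Hk2 gamma Hgamma) as (Hgamma_pos & Hy_gamma & HJ0).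
    split; [|split; [|split; [|split; [|split]]]].
    + apply lj_J1_gamma_neg; assumption.
    + apply lj_J2_gamma_neg; assumption.
    + apply lj_J2_delta1_neg; assumption.
    + apply lj_J2_gamma_gt_midpoint; assumption.
    + intros t Ht. apply lj_remainder_nonpos; assumption.
    + intros theta _. exists 1. split; [lra|].
      intros t Ht _. apply lj_J2_midpoint_neg; assumption.
  - destruct Hvalid as (Hd1 & Hk1 & Hk2).
    assert (Hy_delta1 := morse_delta1 d1 k1 k2 Hk1 Hk2 delta1 Hdelta1).
    destruct (morse_gamma d1 k1 k2 Hd1 Hk1 Hk2 gamma Hgamma) as [Hroot HJ0].
    split; [|split; [|split; [|split; [|split]]]].
    + apply morse_J1_gamma_neg; assumption.
    + apply morse_J2_gamma_neg; assumption.
    + apply morse_J2_delta1_neg; assumption.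
    + apply morse_J2_gamma_gt_midpoint; assumption.
    + intros t _. apply morse_remainder_nonpos; assumption.
    + intros theta Htheta.
      destruct (morse_J2_midpoint_neg_near d1 k1 k2 Hd1 Hk1 Hk2 gamma Hroot theta Htheta)
        as [eta [Heta Hneg]].
      exists eta. split; [exact Heta|]. intros t _. apply Hneg.
Qed.
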